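(* Assume the setting below with $Y_i(0)=0$ for all $i$. Let $1\le k_1\le k_2\le\dots\le k_J\le N$, and for each $j$ let $$k_j(\alpha)=N_1-Q_{\mathrm H}(1-\alpha;N,N-k_j,N_1).$$ Then $$\Pr\Big(\bigcap_{j=1}^J\{\tau_{(k_j)}\ge y_{(k_j(\alpha))}\}\Big)\ \ge\ 1-\Pr\Big(\bigcup_{j=1}^J\Big\{\sum_{i=1}^N Z_i\mathbb{1}(i>k_j)>Q_{\mathrm H}(1-\alpha;N,N-k_j,N_1)\Big\}\Big).$$ Equality holds when all ITEs $\tau_1,\dots,\tau_N$ are distinct. On the right-hand side, $Z$ is the CRE assignment vector; the right-hand side depends only on $N,N_1,\alpha,k_1,\dots,k_J$.
   Context: Setting: - There are $N$ units with fixed potential outcomes $Y_i(1),Y_i(0)$ and ITE $\tau_i=Y_i(1)-Y_i(0)$. - The sorted ITEs are $\tau_{(1)}\le\dots\le\tau_{(N)}$. - CRE: the assignment vector $Z\in\{0,1\}^N$ is uniformly distributed over vectors with exactly $N_1$ ones, where $1\le N_1<N$. - The observed outcome is $Y_i=Z_iY_i(1)+(1-Z_i)Y_i(0)$. - $Q_{\mathrm H}(\theta;N,n,N_1)=\inf\{x:\Pr(X\le x)\ge\theta\}$ is the $\theta$-quantile of a Hypergeometric random variable $X$ with parameters $(N,n,N_1)$ (population size $N$, $n$ marked items, sample size $N_1$). - $y_{(1)}\le\dots\le y_{(N_1)}$ are the sorted observed outcomes of the treated units, with $y_{(0)}=-\infty$. *)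

From mathcomp Require Import all_boot all_order all_algebra.
Set Implicit Arguments. Unset Strict Implicit. Unset Printing Implicit Defensive.
Import Order.TTheory GRing.Theory Num.Theory.
Local Open Scope ring_scope.

Section CRE.
Variable R : realFieldType.

(* Probability of an event (a predicate on assignments) under the completely
   randomized experiment: Z, identified with the set of treated units, is uniform
   over the subsets of 'I_N of size N1. *)
Definition PrCRE (N N1 : nat) (E : pred {set 'I_N}) : R :=
  #|[set Z : {set 'I_N} | (#|Z| == N1) && E Z]|%:R /
  #|[set Z : {set 'I_N} | #|Z| == N1]|%:R.

(* CDF of a Hypergeometric(N, n, N1) variable X (population N, n marked items,
   sample size N1): Pr(X <= x) = sum_{i <= x} C(n,i) C(N-n,N1-i) / C(N,N1). *)
Definition hyperCDF (N n N1 x : nat) : R :=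
  \sum_(i < x.+1 | (i <= N1)%N) ('C(n, i) * 'C(N - n, N1 - i))%:R / ('C(N, N1))%:R.

(* Q_H(theta; N, n, N1) = inf {x : Pr(X <= x) >= theta}.  Since X is integer
   valued in [0, N1] and its CDF is a right-continuous step function, for
   0 < theta <= 1 this infimum is the least natural number x (necessarily <= N1)
   with Pr(X <= x) >= theta. *)
Definition hyperQ (theta : R) (N n N1 : nat) : nat :=
  find (fun x => theta <= hyperCDF N n N1 x) (iota 0 N1.+1).

(* k-th order statistic (1-indexed) of a finite list of reals; default 0 out
   of range (never used out of range in the statement). *)
Definition ordstat (s : seq R) (k : nat) : R := nth 0 (sort <=%R s) k.-1.

End CRE.

From mathcomp Require Import all_boot all_order all_algebra.
From mathcomp Require Import ring zify.
Set Implicit Arguments. Unset Strict Implicit. Unset Printing Implicit Defensive.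
Import Order.TTheory GRing.Theory Num.Theory.
Local Open Scope ring_scope.

(* Since Y(0) = 0, a treated unit's observed outcome is its ITE.  Rank the units
   by ITE: the ranks of the treated units again form a uniform N1-subset.  If at
   most Q_j of them have rank >= k_j, then at least N1 - Q_j treated units have
   rank < k_j, hence ITE <= tau_(k_j), i.e. y_(N1 - Q_j) <= tau_(k_j).  When the
   ITEs are distinct, rank < k_j is equivalent to ITE <= tau_(k_j), and the
   implication reverses. *)

Section CREProbability.
Variables (R : realFieldType) (N N1 : nat).
Implicit Types E F : pred {set 'I_N}.

Local Notation Pr := (@PrCRE R N N1).

Lemma le_PrCRE E F :
  (forall Z : {set 'I_N}, #|Z| = N1 -> E Z -> F Z) -> Pr E <= Pr F.
Proof.
move=> EF; apply: ler_wpM2r; first by rewrite invr_ge0 ler0n.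
rewrite ler_nat; apply/subset_leq_card/subsetP => Z.
by rewrite !inE => /andP[/eqP cZ EZ]; rewrite cZ eqxx EF.
Qed.

Lemma eq_PrCRE E F :
  (forall Z : {set 'I_N}, #|Z| = N1 -> E Z = F Z) -> Pr E = Pr F.
Proof.
move=> EF; rewrite /PrCRE; congr (_%:R / _); apply: eq_card => Z.
by rewrite !inE; case: eqP => // /EF ->.
Qed.

Lemma PrCRE_predC E : (N1 <= N)%N -> Pr (fun Z => ~~ E Z) = 1 - Pr E.
Proof.
move=> N1N; rewrite /PrCRE.
have D_gt0 : (0 < #|[set Z : {set 'I_N} | #|Z| == N1]|)%N.
  by rewrite card_draws card_ord bin_gt0.
have card_split : #|[set Z : {set 'I_N} | #|Z| == N1]| =
    (#|[set Z : {set 'I_N} | (#|Z| == N1) && E Z]| +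
     #|[set Z : {set 'I_N} | (#|Z| == N1) && ~~ E Z]|)%N.
  rewrite -(cardsID [set Z : {set 'I_N} | E Z]).
  by congr addn; apply: eq_card => Z; rewrite !inE // andbC.
rewrite card_split in D_gt0 *.
move: D_gt0; rewrite -(ltr0n R) natrD => D_gt0.
by field; rewrite lt0r_neq0.
Qed.

Lemma PrCRE_preimset (f : 'I_N -> 'I_N) E :
  injective f -> Pr (fun Z => E (f @^-1: Z)) = Pr E.
Proof.
move=> f_inj; have [g fK gK] := injF_bij f_inj.
have preim_inj : injective (fun A : {set 'I_N} => f @^-1: A).
  move=> A B eqAB; apply/setP => x.
  by have := congr1 (fun S : {set 'I_N} => g x \in S) eqAB; rewrite !inE gK.
rewrite /PrCRE -[in RHS](card_preimset _ preim_inj).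
by congr (_%:R / _); apply: eq_card => Z; rewrite !inE card_preimset.
Qed.

End CREProbability.

Section OrderStatistics.
Variable R : realFieldType.

Lemma sorted_nth_le_count (t : seq R) (x : R) m :
  sorted <=%R t -> (0 < m <= size t)%N ->
  (nth 0 t m.-1 <= x) = (m <= count (<= x) t)%N.
Proof.
elim: t m => [|a t IH] m /= t_sorted; first by case: m.
case/andP=> m_gt0 m_le.
have a_min : all (fun y => a <= y) t by exact: order_path_min le_trans t_sorted.
have {}t_sorted : sorted <=%R t by exact: path_sorted t_sorted.
case: (lerP a x) => [ax | xa].
  case: m m_gt0 m_le => [//|[|m]] _ m_le /=; first by rewrite ax.
  by rewrite (IH m.+1) ?ax.
have count0 : count (<= x) t = 0%N.
  apply/eqP; rewrite -leqn0 leqNgt -has_count; apply/hasPn => y y_t /=.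
  by rewrite -ltNge (lt_le_trans xa) //; exact: (allP a_min).
rewrite count0; case: m m_gt0 m_le => [//|[|m]] _ m_le /=.
  by rewrite leNgt xa.
by rewrite (IH m.+1) // count0.
Qed.

Lemma ordstat_le_count (s : seq R) (x : R) m :
  (0 < m <= size s)%N -> (ordstat s m <= x) = (m <= count (<= x) s)%N.
Proof.
move=> m_bd; rewrite /ordstat sorted_nth_le_count ?size_sort //.
  by rewrite count_sort.
by apply: sort_sorted; exact: le_total.
Qed.

(* [m == 0] encodes the convention that the 0-th order statistic is -oo. *)
Lemma ordstat_sub_le_card (T : finType) (g : T -> R) (Z : {set T}) m x :
  (m <= #|Z|)%N ->
  ((m == 0%N) || (ordstat [seq g i | i <- enum T & i \in Z] m <= x))
    = (m <= #|[set i in Z | (g i <= x)%R]|)%N.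
Proof.
have size_sub : size [seq g i | i <- enum T & i \in Z] = #|Z|.
  by rewrite size_map enumT cardE.
case: m => [|m] m_le //=; rewrite ordstat_le_count ?size_sub //.
rewrite count_map count_filter enumT cardE /enum_mem size_filter.
by congr (_ < _)%N; apply: eq_count => i; rewrite /= !inE andbC.
Qed.

End OrderStatistics.

Section Ranking.
Variables (R : realFieldType) (N : nat) (f : 'I_N -> R).

Definition rank_order : seq 'I_N := sort (fun a b => f a <= f b) (enum 'I_N).

Definition unit_of_rank (r : 'I_N) : 'I_N := nth r rank_order r.

Lemma size_rank_order : size rank_order = N.
Proof. by rewrite size_sort size_enum_ord. Qed.

Lemma unit_of_rank_inj : injective unit_of_rank.
Proof.
move=> r1 r2; rewrite /unit_of_rank (set_nth_default r1 r2) ?size_rank_order //.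
move/eqP; rewrite nth_uniq ?size_rank_order ?sort_uniq ?enum_uniq //.
by move/eqP/val_inj.
Qed.

Lemma unit_of_rank_mono (r1 r2 : 'I_N) :
  (r1 <= r2)%N -> f (unit_of_rank r1) <= f (unit_of_rank r2).
Proof.
move=> le12; rewrite /unit_of_rank (set_nth_default r1 r2) ?size_rank_order //.
have sorted_order : sorted (fun a b => f a <= f b) rank_order.
  by apply: sort_sorted => a b; exact: le_total.
have order_trans : transitive (fun a b : 'I_N => f a <= f b).
  by move=> b a c; exact: le_trans.
by apply: (sorted_leq_nth order_trans (fun a => lexx (f a)) r1 sorted_order);
  rewrite ?inE ?size_rank_order.
Qed.

Lemma ordstat_unit_of_rank (r : 'I_N) :
  ordstat [seq f i | i <- enum 'I_N] r.+1 = f (unit_of_rank r).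
Proof.
rewrite /ordstat -(map_sort (leT' := fun a b : 'I_N => f a <= f b)) //.
by rewrite (nth_map r) ?size_sort ?size_enum_ord /=.
Qed.

Variable Z : {set 'I_N}.

Lemma card_ranks_split k :
  (#|[set s in unit_of_rank @^-1: Z | (k <= s)%N]| +
   #|[set s in unit_of_rank @^-1: Z | (s < k)%N]|)%N = #|Z|.
Proof.
rewrite -[in RHS](card_preimset Z unit_of_rank_inj).
rewrite -[in RHS](cardsID [set s : 'I_N | (k <= s)%N]).
congr addn; apply: eq_card => s.
  by rewrite !inE.
by rewrite !inE ltnNge andbC.
Qed.

Lemma card_ranks_below_le k : (0 < k <= N)%N ->
  (#|[set s in unit_of_rank @^-1: Z | (s < k)%N]|
     <= #|[set i in Z | (f i <= ordstat [seq f i | i <- enum 'I_N] k)%R]|)%N.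
Proof.
case: k => [//|r] /andP[_ rN]; rewrite (ordstat_unit_of_rank (Ordinal rN)).
rewrite -(card_preimset [set i in Z | _] unit_of_rank_inj).
apply/subset_leq_card/subsetP => s.
rewrite !inE => /andP[sZ s_lt]; rewrite sZ; exact: unit_of_rank_mono.
Qed.

Lemma card_ranks_below_eq k : injective f -> (0 < k <= N)%N ->
  #|[set s in unit_of_rank @^-1: Z | (s < k)%N]|
    = #|[set i in Z | (f i <= ordstat [seq f i | i <- enum 'I_N] k)%R]|.
Proof.
move=> f_inj k_bd; apply/eqP; rewrite eqn_leq card_ranks_below_le //=.
case: k k_bd => [//|r] /andP[_ rN]; rewrite (ordstat_unit_of_rank (Ordinal rN)).
rewrite -(card_preimset [set i in Z | _] unit_of_rank_inj).
apply/subset_leq_card/subsetP => s.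
rewrite !inE => /andP[sZ f_le]; rewrite sZ ltnS leqNgt; apply/negP => r_lt_s.
have f_ge : f (unit_of_rank (Ordinal rN)) <= f (unit_of_rank s).
  by apply: unit_of_rank_mono; exact: ltnW.
have /unit_of_rank_inj s_eq : unit_of_rank s = unit_of_rank (Ordinal rN).
  by apply: f_inj; apply/eqP; rewrite eq_le f_le f_ge.
by move: r_lt_s; rewrite s_eq ltnn.
Qed.

Lemma ranks_tail_le_card k q : (0 < k <= N)%N ->
  (#|[set s in unit_of_rank @^-1: Z | (k <= s)%N]| <= q)%N ->
  (#|Z| - q <= #|[set i in Z | (f i <= ordstat [seq f i | i <- enum 'I_N] k)%R]|)%N.
Proof.
move=> /card_ranks_below_le; have := card_ranks_split k; lia.
Qed.

Lemma card_le_ranks_tail k q : injective f -> (0 < k <= N)%N ->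
  (#|Z| - q <= #|[set i in Z | (f i <= ordstat [seq f i | i <- enum 'I_N] k)%R]|)%N ->
  (#|[set s in unit_of_rank @^-1: Z | (k <= s)%N]| <= q)%N.
Proof.
move=> f_inj /(card_ranks_below_eq f_inj) <-; have := card_ranks_split k; lia.
Qed.

End Ranking.

Theorem proposition3 (R : realFieldType) (N N1 : nat) (Y1 Y0 : 'I_N -> R)
    (alpha : R) (J : nat) (k : 'I_J -> nat) :
  (1 <= N1)%N -> (N1 < N)%N ->
  (forall i, Y0 i = 0) ->
  0 < alpha -> alpha < 1 ->
  (forall j, (1 <= k j)%N && (k j <= N)%N) ->
  (forall j1 j2 : 'I_J, (j1 <= j2)%N -> (k j1 <= k j2)%N) ->
  let tau := fun i => Y1 i - Y0 i in
  let tau_ord := fun m => ordstat [seq tau i | i <- enum 'I_N] m in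
  let Yobs := fun (Z : {set 'I_N}) i => if i \in Z then Y1 i else Y0 i in
  let y_ord := fun (Z : {set 'I_N}) m =>
    ordstat [seq Yobs Z i | i <- enum 'I_N & i \in Z] m in
  let Q := fun j => hyperQ (1 - alpha) N (N - k j) N1 in
  let ka := fun j => (N1 - Q j)%N in
  (* event tau_(k_j) >= y_(k_j(alpha)), with y_(0) = -infinity *)
  let lhs := @PrCRE R N N1 (fun Z =>
    [forall j : 'I_J, (ka j == 0)%N || (y_ord Z (ka j) <= tau_ord (k j))]) in
  (* units are labelled 1..N; unit (i : 'I_N) has label i+1, so 1(label > k_j)
     is (k_j <= i) *)
  let rhs := 1 - @PrCRE R N N1 (fun Z =>
    [exists j : 'I_J, (Q j < #|[set i in Z | (k j <= i)%N]|)%N]) in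
  rhs <= lhs /\ (injective tau -> lhs = rhs).
Proof.
move=> _ N1_lt_N Y0_eq0 _ _ k_bd _ tau tau_ord Yobs y_ord Q ka lhs rhs.
have event_j (Z : {set 'I_N}) (j : 'I_J) : #|Z| = N1 ->
    ((ka j == 0)%N || (y_ord Z (ka j) <= tau_ord (k j)))
    = (#|Z| - Q j <= #|[set i in Z | (tau i <= tau_ord (k j))%R]|)%N.
  move=> cZ; rewrite /y_ord ordstat_sub_le_card ?cZ ?leq_subr //.
  congr (_ <= _)%N; apply: eq_card => i; rewrite !inE /Yobs /tau Y0_eq0 subr0.
  by case: (i \in Z).
have rhsE : rhs = @PrCRE R N N1 (fun Z =>
    [forall j, #|[set s in unit_of_rank tau @^-1: Z | (k j <= s)%N]| <= Q j]%N).
  rewrite /rhs -PrCRE_predC ?(ltnW N1_lt_N) //.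
  rewrite -(PrCRE_preimset R N1 _ (@unit_of_rank_inj _ _ tau)).
  apply: eq_PrCRE => Z _ /=; rewrite negb_exists.
  by apply: eq_forallb => j; rewrite -leqNgt.
split.
  rewrite rhsE; apply: le_PrCRE => Z cZ /forallP tail_le.
  apply/forallP => j; rewrite event_j //; exact: ranks_tail_le_card.
move=> tau_inj; rewrite rhsE; apply: eq_PrCRE => Z cZ.
apply: eq_forallb => j; rewrite event_j //.
by apply/idP/idP; [exact: card_le_ranks_tail | exact: ranks_tail_le_card].
Qed.
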